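(* In the symmetric-erasure retransmission model described in the context (''waits do not loop''): let $\tau\ge 1$, $\ell\ge 1$, and let $u_1,\dots,u_{\ell+1}$ be vertices with $u_{i+1}\in\mathcal N_{u_i}$ for $1\le i\le \ell$, such that for every $1\le i\le\ell$ the event $W^{(\tau+i-1)}_{u_{i+1}u_i}$ occurs, and for every $2\le i\le \ell$ the event $W^{(\tau+i-1)}_{u_{i+1}u_i}$ is caused by $W^{(\tau+i-2)}_{u_iu_{i-1}}$. Then the vertices $u_1,\dots,u_\ell$ are pairwise distinct.
   Context: Let $\mathcal G=(\mathcal V,\mathcal E)$ be a finite connected undirected simple graph with $N=|\mathcal V|$ vertices and maximum degree $\Delta$; $\mathcal N_v$ denotes the set of neighbours of $v$. Fix an erasure probability $p\in[0,1]$. Erasures are symmetric: for every undirected edge $e\in\mathcal E$ and every round $t\ge 1$ there is a random variable $S^e_t\in\{0,1\}$ with $P(S^e_t=1)=1-p$ ($S^e_t=1$ means the edge works in round $t$, $S^e_t=0$ means the packets in both directions on $e$ are erased in round $t$), and all these variables are mutually independent. The retransmission protocol for distributed consensus is described by integer state variables $n_{vu}(t)$, for every ordered pair $(v,u)$ with $u\in\mathcal N_v$ and every $t\ge 0$ (the index of the latest iterate of node $u$ available at node $v$ after round $t$), together with $n_v(t)=1+\min_{u\in\mathcal N_v} n_{vu}(t)$ (the number of iterations of the consensus update $x^v_{k+1}=x^v_k-\epsilon\sum_{u\in\mathcal N_v}(x^v_k-x^u_k)$ that node $v$ has completed after round $t$). Initially $n_{vu}(0)=-1$ for all such pairs (so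 $n_v(0)=0$), and for all $t\ge 0$ $$n_{vu}(t+1)=n_{vu}(t)+S^{\{u,v\}}_{t+1}\cdot\mathbf 1\{n_u(t)>n_{vu}(t)\}.$$ Node $u$ is said to transmit a ''wait'' to node $v$ in round $t+1$ iff $n_{vu}(t)=n_u(t)$. For $\tau\ge1$ and $u\in\mathcal N_v$, $W^{(\tau)}_{uv}$ denotes the event that node $v$ transmits a wait to node $u$ in round $\tau$, i.e. $n_{uv}(\tau-1)=n_v(\tau-1)$. For vertices $v,u,u'$ with $u\in\mathcal N_v$, $u'\in\mathcal N_u$, if both $W^{(\tau)}_{uv}$ and $W^{(\tau+1)}_{u'u}$ occur, then $W^{(\tau)}_{uv}$ is said to cause $W^{(\tau+1)}_{u'u}$ if (a) $n_u(\tau-1)=1+n_{uv}(\tau-1)$ and (b) $n_{u'u}(\tau)=n_u(\tau)$. *)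

From HB Require Import structures.
From mathcomp Require Import all_boot all_order all_algebra.
Set Implicit Arguments. Unset Strict Implicit. Unset Printing Implicit Defensive.
Import Order.TTheory GRing.Theory Num.Theory.
Local Open Scope ring_scope.

(* Erasure realisation: S u v t = S^{{u,v}}_t (true = edge works in round t);
   symmetry S u v t = S v u t is assumed in the theorem. *)

(* minimum of a list of integers (0 on the empty list; never used for
   vertices with at least one neighbour) *)
Definition minlist (s : seq int) : int :=
  match s with [::] => 0 | x :: xs => foldr Order.min x xs end.

Section Protocol.
Variables (T : finType) (e : rel T) (S : T -> T -> nat -> bool).

Definition nv_of (st : T -> T -> int) (v : T) : int :=
  1 + minlist [seq st v u | u <- enum T & e v u].

(* nst t v u = n_{vu}(t) *)
Fixpoint nst (t : nat) : T -> T -> int :=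
  match t with
  | 0 => fun _ _ => -1
  | t'.+1 => fun v u =>
      let prev := nst t' in
      prev v u + ((S u v t'.+1 && (prev v u < nv_of prev u)) : nat)%:R
  end.

Definition nv (t : nat) (v : T) : int := nv_of (nst t) v.

(* W^{(tau)}_{uv}: v transmits a wait to u in round tau,
   i.e. n_{uv}(tau-1) = n_v(tau-1) *)
Definition Wait (tau : nat) (u v : T) : Prop := nst tau.-1 u v = nv tau.-1 v.

Definition causes (tau : nat) (u v u' : T) : Prop :=
  [/\ Wait tau u v, Wait tau.+1 u' u,
      nv tau.-1 u = 1 + nst tau.-1 u v
    & nst tau u' u = nv tau u].
End Protocol.

From HB Require Import structures.
From mathcomp Require Import all_boot all_order all_algebra.
From mathcomp Require Import zify.
Import Order.TTheory GRing.Theory Num.Theory.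

Set Implicit Arguments.
Unset Strict Implicit.
Unset Printing Implicit Defensive.

Local Open Scope ring_scope.

(* Write N_t(v) for n_v(t), the number of iterations node v has completed
   after round t.  The proof has three layers.
   1. Minima of lists: minlist is attained and is a lower bound, hence it is
      monotone and 1-Lipschitz under pointwise shifts of its arguments.
   2. The protocol: each counter n_{vu} grows by at most one per round and
      freezes while u is waiting, so N_t(v) is nondecreasing, grows by at
      most one per round, and N_t(v) <= 1 + n_{vu}(t) for every neighbour u.
      Consequently a node u whose wait-causing neighbour v is the bottleneck
      (condition (a) of causality) does not advance in the round of the
      wait and stays exactly one iteration ahead of v.
   3. A counting argument: along the chain, N evaluated at the successive
      rounds increases by exactly one per step, while a single node can gain
      at most one iteration per round; so a vertex met twice would have to
      gain j - i iterations in only j - i - 1 rounds. *)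

Lemma minlist_le (s : seq int) (x : int) : x \in s -> minlist s <= x.
Proof.
case: s => // a r /=.
elim: r x => [|b r IH] x; first by rewrite mem_seq1 => /eqP ->.
rewrite /= ge_min !in_cons => /or3P [xa | /eqP-> | xr].
- by rewrite IH ?orbT // in_cons xa.
- by rewrite lexx.
- by rewrite IH ?orbT // in_cons xr orbT.
Qed.

Lemma minlist_mem (s : seq int) : s != [::] -> minlist s \in s.
Proof.
case: s => // a r _ /=; elim: r => [|b r IH] /=; first by rewrite mem_head.
rewrite /Order.min; case: ifP => _; first by rewrite !in_cons eqxx orbT.
by move: IH; rewrite !in_cons => /orP [-> | ->]; rewrite ?orbT.
Qed.

Lemma minlist_shift (I : eqType) (f g : I -> int) (c : int) (r : seq I) :
  0 <= c -> (forall z, f z <= g z + c) ->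
  minlist (map f r) <= minlist (map g r) + c.
Proof.
move=> c_ge0 fg; case: r => [|a r]; first by rewrite /= add0r.
have /mapP [z zr ->] : minlist (map g (a :: r)) \in map g (a :: r).
  exact: minlist_mem.
by apply: le_trans (fg z); apply: minlist_le; apply: map_f.
Qed.

Section Protocol.
Variables (T : finType) (e : rel T) (S : T -> T -> nat -> bool).

Local Notation nst := (nst e S).
Local Notation nv := (nv e S).

Lemma nv_of_shift (st st' : T -> T -> int) (c : int) (v : T) :
  0 <= c -> (forall u, st' v u <= st v u + c) ->
  nv_of e st' v <= nv_of e st v + c.
Proof.
move=> c_ge0 shift; rewrite /nv_of -addrA lerD2l.
exact: minlist_shift.
Qed.

Lemma nst_step t v u : nst t v u <= nst t.+1 v u <= nst t v u + 1.
Proof. by rewrite /=; case: (S u v t.+1 && _) => /=; lia. Qed.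

Lemma nst_frozen t v u : nst t v u = nv t u -> nst t.+1 v u = nst t v u.
Proof. by rewrite /= /nv => ->; rewrite ltxx andbF addr0. Qed.

Lemma nv_le_neighbour t v u : e v u -> nv t v <= 1 + nst t v u.
Proof.
move=> evu; rewrite /nv /nv_of lerD2l; apply: minlist_le.
by apply: map_f; rewrite mem_filter evu mem_enum.
Qed.

Lemma nv_mono t v : nv t v <= nv t.+1 v.
Proof.
rewrite -[nv t.+1 v]addr0; apply: nv_of_shift => // u.
by rewrite addr0; case/andP: (nst_step t v u).
Qed.

Lemma nv_step t v : nv t.+1 v <= nv t v + 1.
Proof. by apply: nv_of_shift => // u; case/andP: (nst_step t v u). Qed.

Lemma nv_steps t k v : nv (t + k) v <= nv t v + k%:Z.
Proof.
elim: k => [|k IH]; first by rewrite addn0 addr0.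
by have := nv_step (t + k) v; rewrite addnS; lia.
Qed.

Lemma blocked_by_wait t u v :
  e u v -> nst t u v = nv t v -> nv t u = 1 + nst t u v ->
  nv t.+1 u = nv t u /\ nv t u = 1 + nv t v.
Proof.
move=> euv wait bottleneck; split; last by rewrite bottleneck wait.
apply/eqP; rewrite eq_le nv_mono andbT.
by rewrite bottleneck -(nst_frozen wait) nv_le_neighbour.
Qed.
End Protocol.

(* Then b k := N (t + k - 1) (us k) increases by one per link, which
   a repeated vertex cannot afford. *)
Lemma ahead_chain_distinct (T : Type) (N : nat -> T -> int) (t l : nat)
    (us : nat -> T) :
  (forall s k v, N (s + k)%N v <= N s v + k%:Z) ->
  (forall k, (1 <= k < l)%N ->
     N (t + k)%N (us k.+1) = N (t + k.-1)%N (us k.+1) /\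
     N (t + k.-1)%N (us k.+1) = 1 + N (t + k.-1)%N (us k)) ->
  forall i j, (1 <= i <= l)%N -> (1 <= j <= l)%N -> us i = us j -> i = j.
Proof.
move=> growth chain.
pose b k := N (t + k.-1)%N (us k).
have b_succ k : (1 <= k < l)%N -> b k.+1 = 1 + b k.
  by move=> hk; have [stay ahead] := chain k hk; rewrite /b /= stay ahead.
have b_add i d : (1 <= i)%N -> (i + d <= l)%N -> b (i + d)%N = b i + d%:Z.
  move=> hi; elim: d => [|d IH] hd; first by rewrite addn0 addr0.
  by rewrite addnS b_succ ?IH; lia.
have no_repeat i j : (1 <= i)%N -> (i < j)%N -> (j <= l)%N -> us i <> us j.
  move=> hi hij hj same.
  have jS : j.-1.+1 = j by lia.
  have [stay _] := chain j.-1 ltac:(lia); rewrite jS in stay.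
  have bj := b_add i (j - i)%N hi ltac:(lia); rewrite subnKC in bj; last lia.
  have := growth (t + i.-1)%N (j.-1 - i)%N (us i).
  rewrite (_ : (t + i.-1 + (j.-1 - i))%N = (t + j.-2)%N); last lia.
  by rewrite same -stay; move: bj; rewrite /b same; lia.
move=> i j hi hj same; case: (ltngtP i j) => // ij; exfalso.
- by apply: (no_repeat i j) => //; lia.
- by apply: (no_repeat j i) => //; lia.
Qed.

Theorem lemma10 (T : finType) (e : rel T)
    (e_sym : symmetric e) (e_irr : irreflexive e)
    (e_conn : forall x y : T, connect e x y)
    (S : T -> T -> nat -> bool)
    (S_sym : forall u v t, S u v t = S v u t)
    (tau l : nat) (us : nat -> T) :
  (1 <= tau)%N -> (1 <= l)%N ->
  (forall i, (1 <= i <= l)%N -> e (us i) (us i.+1)) ->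
  (forall i, (1 <= i <= l)%N -> Wait e S (tau + i - 1) (us i.+1) (us i)) ->
  (forall i, (2 <= i <= l)%N ->
     causes e S (tau + i - 2) (us i) (us i.-1) (us i.+1)) ->
  forall i j, (1 <= i <= l)%N -> (1 <= j <= l)%N -> us i = us j -> i = j.
Proof.
move=> tau_ge1 _ edge _ caused.
apply: (ahead_chain_distinct (t := tau.-1) (@nv_steps _ e S)) => k hk.
have [wait _ bottleneck _] := caused k.+1 ltac:(lia).
have round : (tau + k.+1 - 2).-1 = (tau.-1 + k.-1)%N by lia.
rewrite /Wait round in wait; rewrite round in bottleneck.
have link : e (us k.+1) (us k) by rewrite e_sym edge //; lia.
have [stay ahead] := blocked_by_wait link wait bottleneck.
split; last exact: ahead.
by rewrite -stay; congr nv; lia.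
Qed.
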